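(* Let $M$ be a finite abelian group and $J$ a Jacobi function on $M$, and set $J^*(\alpha,\beta)=-\delta(\alpha)-\delta(\beta)+J(\alpha,\beta)$. Then $J^*(1,\alpha)\neq0$ for every non-trivial $\alpha\in M$.
   Context: $M$ is written multiplicatively with identity $1$; $\delta(\alpha)=1$ if $\alpha=1$ and $0$ otherwise. A Jacobi function on $M$ is a function $J\colon M\times M\to\mathbf{C}$ satisfying: (A) $J(\alpha,\beta)=J(\beta,\alpha)$; (B) $J^*(\alpha,\beta)J^*(\alpha\beta,\gamma)=J^*(\alpha,\beta\gamma)J^*(\beta,\gamma)$; (C) $\sum_{\beta\in M}J(\alpha_1\beta,\alpha_2\beta^{-1})J(\alpha_3\beta,\alpha_4\beta^{-1})=J(\alpha_1\alpha_4,\alpha_2\alpha_3)$; all for all elements of $M$. *)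

From HB Require Import structures.
From mathcomp Require Import all_boot all_order all_algebra all_fingroup.
From mathcomp Require Import complex.
From mathcomp Require Import Rstruct.
Set Implicit Arguments. Unset Strict Implicit. Unset Printing Implicit Defensive.
Import GRing.Theory.
Local Open Scope ring_scope.

Definition CC := complex Rdefinitions.R.

Section Jacobi.
Variable gT : finGroupType.

Definition delta (a : gT) : CC := if a == 1%g then 1%R else 0%R.

Definition Jstar (J : gT -> gT -> CC) (a b : gT) : CC :=
  (- delta a - delta b + J a b)%R.

Definition is_Jacobi (J : gT -> gT -> CC) : Prop :=
  [/\ (forall a b : gT, J a b = J b a),
      (forall a b c : gT, Jstar J a b * Jstar J (a * b)%g c =
                      Jstar J a (b * c)%g * Jstar J b c) &
      (forall a1 a2 a3 a4 : gT,
         \sum_(b : gT) J (a1 * b)%g (a2 * b^-1)%g * J (a3 * b)%g (a4 * b^-1)%g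
         = J (a1 * a4)%g (a2 * a3)%g)].
End Jacobi.

From HB Require Import structures.
From mathcomp Require Import all_boot all_order all_algebra all_fingroup.
From mathcomp Require Import complex Rstruct ring.

(* For n in M put g_n(x) = J(x, n x^-1). Axiom (C) says exactly that g_n * g_n = g_(n^2)
   for the convolution on M. On an abelian group, ||f * f||^2 equals ||f * f~||^2 with
   f~(x) = conj f(x^-1), and the value of f * f~ at 1 is ||f||^2; hence
   ||g_n||^4 <= ||g_(n^2)||^2. Taking n with ||g_n|| maximal forces ||g_n|| <= 1 for all n.
   But J^*(1,a) = 0 with a <> 1 means J(1,a) = J(a,1) = 1, i.e. g_a(1) = g_a(a) = 1, so
   ||g_a||^2 >= 2. Only the symmetry (A) and the convolution identity (C) are needed. *)

Set Implicit Arguments.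
Unset Strict Implicit.
Unset Printing Implicit Defensive.

Import GRing.Theory Num.Theory Order.TTheory.
Local Open Scope ring_scope.

Lemma le1_of_sqr_le_map (R : numDomainType) (T : finType) (s : T -> T) (Q : T -> R) :
  (forall x, 0 <= Q x) -> (forall x, Q x ^+ 2 <= Q (s x)) -> forall x, Q x <= 1.
Proof.
move=> Q_ge0 Q_sqr x.
have Q_real y : Q y \is Num.real by rewrite ger0_real.
have [m _ Q_max] := @real_arg_maxP _ _ x predT Q isT (fun y _ => Q_real y).
apply: le_trans (Q_max x isT) _.
have Qm_sqr_le : Q m * Q m <= Q m * 1.
  by rewrite mulr1 -expr2 (le_trans (Q_sqr m) (Q_max _ isT)).
have [Qm_gt0 | Qm_le0] := real_ltP (real0 R) (Q_real m).
  by rewrite -(ler_pM2l Qm_gt0).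
by rewrite (le_trans Qm_le0) ?ler01.
Qed.

Section Convolution.
Variables (C : numClosedFieldType) (M : finGroupType).
Hypothesis mulgC : forall x y : M, (x * y = y * x)%g.

Definition conv (f g : M -> C) (u : M) : C := \sum_(x : M) f x * g (u * x^-1)%g.

Definition adjfun (f : M -> C) (x : M) : C := (f x^-1%g)^*.

Definition sqnorm (f : M -> C) : C := \sum_(x : M) `|f x| ^+ 2.

Lemma sqnorm_ge0 f : 0 <= sqnorm f.
Proof. by apply: sumr_ge0 => x _; rewrite exprn_ge0. Qed.

Lemma conv_adjfun1 f : conv f (adjfun f) 1%g = sqnorm f.
Proof. by apply: eq_bigr => x _; rewrite /adjfun mul1g invgK normCK. Qed.

Lemma sqnorm_conv_adjfun f : sqnorm (conv f f) = sqnorm (conv f (adjfun f)).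
Proof.
rewrite /sqnorm.
under eq_bigr => u _ do rewrite normCK rmorph_sum /= mulr_suml.
under [RHS]eq_bigr => v _ do rewrite normCK rmorph_sum /= mulr_suml.
rewrite exchange_big [RHS]exchange_big /=; apply: eq_bigr => x _.
under eq_bigr => u _ do rewrite mulr_sumr.
under [RHS]eq_bigr => v _ do rewrite mulr_sumr.
rewrite exchange_big [RHS]exchange_big /=; apply: eq_bigr => y _.
(* the substitution v = x y u^-1 matches the four arguments of f *)
have mulxy_invg_inj : injective (fun u : M => x * y * u^-1)%g.
  by move=> u w /mulgI /invg_inj.
rewrite (reindex_inj mulxy_invg_inj).
apply: eq_bigr => u _; rewrite /adjfun !rmorphM /= conjCK !invMg !invgK.
have -> : (x * y * u^-1 * x^-1 = y * u^-1)%g.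
  by rewrite (mulgC _ x^-1) -!mulgA mulKg.
have -> : (x * y * u^-1 * y^-1 = x * u^-1)%g.
  by rewrite -!mulgA (mulgC u^-1 y^-1) mulKVg.
ring.
Qed.

Lemma sqnorm_conv_ge f : sqnorm f ^+ 2 <= sqnorm (conv f f).
Proof.
rewrite sqnorm_conv_adjfun [leRHS](bigD1 1%g) //= conv_adjfun1.
rewrite ger0_norm ?sqnorm_ge0 // lerDl.
by apply: sumr_ge0 => v _; rewrite exprn_ge0.
Qed.

End Convolution.

Section JacobiSlices.
Variable M : finGroupType.
Hypothesis mulgC : forall x y : M, (x * y = y * x)%g.
Variable J : M -> M -> CC.
Hypothesis HJ : is_Jacobi J.

Definition jacobi_slice (n x : M) : CC := J x (n * x^-1)%g.

Lemma conv_jacobi_slice n u :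
  conv (jacobi_slice n) (jacobi_slice n) u = jacobi_slice (n * n)%g u.
Proof.
case: HJ => J_sym _ J_conv.
rewrite /jacobi_slice -mulgA -[u in J u](mul1g u) -J_conv.
apply: eq_bigr => x _; rewrite mul1g [J (u * x^-1)%g _]J_sym; congr (_ * J _ _).
by rewrite invMg invgK -mulgA (mulgC x).
Qed.

Lemma sqnorm_jacobi_slice_le1 n : sqnorm (jacobi_slice n) <= 1.
Proof.
apply: (@le1_of_sqr_le_map _ _ (fun m => m * m)%g (fun m => sqnorm (jacobi_slice m))).
  by move=> m; apply: sqnorm_ge0.
move=> m; rewrite [leRHS]/sqnorm.
under eq_bigr => u _ do rewrite -conv_jacobi_slice.
exact: sqnorm_conv_ge.
Qed.

Lemma sqnorm_jacobi_slice_ge2 a :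
  a != 1%g -> J 1%g a = 1 -> 2%:R <= sqnorm (jacobi_slice a).
Proof.
case: HJ => J_sym _ _ a_neq1 J1a.
rewrite /sqnorm (bigD1 1%g) //= (bigD1 a) //= /jacobi_slice.
rewrite invg1 mulg1 mulgV [J a 1%g]J_sym J1a normr1 expr1n addrA lerDl.
by apply: sumr_ge0 => x _; rewrite exprn_ge0.
Qed.

End JacobiSlices.

Lemma Jstar1l (M : finGroupType) (J : M -> M -> CC) a :
  a != 1%g -> Jstar J 1%g a = J 1%g a - 1.
Proof. by move=> a_neq1; rewrite /Jstar /delta eqxx (negbTE a_neq1) subr0 addrC. Qed.

Theorem mainTheorem8 (M : finGroupType)
  (Mabel : forall x y : M, (x * y = y * x)%g)
  (J : M -> M -> CC) (HJ : is_Jacobi J) :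
  forall a : M, a != 1%g -> Jstar J 1%g a != 0%R.
Proof.
move=> a a_neq1; rewrite Jstar1l // subr_eq0; apply/eqP => J1a.
have := le_trans (sqnorm_jacobi_slice_ge2 HJ a_neq1 J1a)
                 (sqnorm_jacobi_slice_le1 Mabel HJ a).
by rewrite lern1.
Qed.
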